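(* Let $\mathcal C$ be the UM simplex $(n,k)$ code. Then for every $s\ge 0$ the binary block code generated by $G_{\rm total}$ has minimum distance $3\cdot2^{k-1}$. Moreover, the column distances and free distance of $\mathcal C$ satisfy $d_0=2^k$ and $d_{free}=d_j=3\cdot2^{k-1}$ for all $j\ge1$.
   Context: Let $k\ge2$ and let $G\in\mathbb F_2^{k\times(2^k-1)}$ be a generator matrix of the binary simplex code (columns are all distinct nonzero vectors of $\mathbb F_2^k$); set $n=2(2^k-1)$. The UM simplex $(n,k)$ code $\mathcal C$ is the binary convolutional code $\{u(D)G(D): u(D)\in\mathbb F_2^k[D]\}\subseteq\mathbb F_2^n[D]$ with encoder $G(D)=G_0+G_1D$, $G_0=[G\ G]$, $G_1=[G\ 0]\in\mathbb F_2^{k\times n}$. For $u(D)=\sum_{i=0}^s u_iD^i$, the codeword $c(D)=\sum_{i=0}^{s+1}c_iD^i$ satisfies $(c_0,\dots,c_{s+1})=(u_0,\dots,u_s)G_{\rm total}$, where $G_{\rm total}\in\mathbb F_2^{(s+1)k\times(s+2)n}$ is the block matrix whose $i$-th block row ($i=0,\dots,s$) has $G_0$ in block column $i$, $G_1$ in block column $i+1$ and zeros elsewhere (block columns of width $n$). The free distance is $d_{free}=\min\{wt(c(D)): 0\ne c(D)\in\mathcal C\}$ with $wt(c(D))=\sum_i wt(c_i)$ (Hamming weight). The $j$-th column distance is $d_j=\min\{wt(c_0+c_1D+\dots+c_jD^j): \sum_i c_iD^i\in\mathcal C,\ c_0\ne0\}$. *)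

From HB Require Import structures.
From mathcomp Require Import all_boot all_order all_algebra.
Set Implicit Arguments. Unset Strict Implicit. Unset Printing Implicit Defensive.
Import GRing.Theory.
Local Open Scope ring_scope.

Definition wt (m : nat) (v : 'rV['F_2]_m) : nat := #|[set j | v 0 j != 0]|.

Definition is_min (P : nat -> Prop) (d : nat) : Prop :=
  P d /\ forall e, P e -> (d <= e)%N.

Definition simplex_gen (k : nat) (G : 'M['F_2]_(k, 2 ^ k - 1)) : Prop :=
  (forall j, col j G != 0) /\ injective (fun j => col j G).

(* n = 2(2^k-1) columns, written as m + m with m = 2^k-1. *)
Definition UM_G0 (k m : nat) (G : 'M['F_2]_(k, m)) : 'M['F_2]_(k, m + m) :=
  row_mx G G.
Definition UM_G1 (k m : nat) (G : 'M['F_2]_(k, m)) : 'M['F_2]_(k, m + m) :=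
  row_mx G 0.

Definition G_total (k m s : nat) (G : 'M['F_2]_(k, m)) :=
  @mxblock _ s.+1 s.+2 (fun _ => k) (fun _ => (m + m)%N)
    (fun i j => if val j == val i then UM_G0 G
                else if val j == (val i).+1 then UM_G1 G else 0).

Definition block_weights (k m s : nat) (G : 'M['F_2]_(k, m)) (w : nat) : Prop :=
  exists u, u *m G_total s G != 0 /\ wt (u *m G_total s G) = w.

(* Coefficient c_i of the codeword c(D) = u(D) G(D), where
   u(D) = sum_i u_i D^i is given by the sequence u = [u_0; ...; u_s]:
   c_i = u_i G0 + u_{i-1} G1. *)
Definition cw_coef (k m : nat) (G : 'M['F_2]_(k, m)) (u : seq 'rV['F_2]_k)
  (i : nat) : 'rV['F_2]_(m + m) :=
  nth 0 u i *m UM_G0 G + (if i is i'.+1 then nth 0 u i' else 0) *m UM_G1 G.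

(* Weight of the full codeword c(D) (degree <= size u). *)
Definition cw_wt (k m : nat) (G : 'M['F_2]_(k, m)) (u : seq 'rV['F_2]_k) : nat :=
  (\sum_(i < (size u).+1) wt (cw_coef G u i))%N.

Definition free_weights (k m : nat) (G : 'M['F_2]_(k, m)) (w : nat) : Prop :=
  exists u : seq 'rV['F_2]_k, (exists i, cw_coef G u i != 0) /\ cw_wt G u = w.

Definition column_weights (k m : nat) (G : 'M['F_2]_(k, m)) (j w : nat) : Prop :=
  exists u : seq 'rV['F_2]_k, cw_coef G u 0 != 0 /\
    (\sum_(i < j.+1) wt (cw_coef G u i))%N = w.

From mathcomp Require Import all_boot all_order all_algebra zify.
Set Implicit Arguments. Unset Strict Implicit. Unset Printing Implicit Defensive.
Import GRing.Theory.
Local Open Scope ring_scope.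

(* Every nonzero codeword x G of the simplex code has weight 2^(k-1): the
   columns of G run over all nonzero vectors v, and x v = 1 for exactly half of
   all v.  The coefficient c_i = [(u_i + u_(i-1)) G | u_i G] of a codeword of
   the UM code therefore weighs 2^(k-1) times the number of nonzero vectors
   among u_i + u_(i-1) and u_i.  If u_a is nonzero, that number is 2 at a
   (or at least 1 at a-1 and at a, when u_a = u_(a-1)) and at least 1 at
   a+1, so every nonzero codeword has weight at least 3 2^(k-1); the input
   u = x of degree 0 attains it.  With c_0 = [u_0 G | u_0 G] the bound for
   d_0 is 2^k, and the block code generated by G_total is the set of
   codewords of degree at most s+1. *)

Lemma F2_cases (a : 'F_2) : a = 0 \/ a = 1.
Proof. have := ltn_ord a; case: a => [[|[|//]] ?] _; [left|right]; exact/val_inj. Qed.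

Lemma F2_addr_neq0 (a b : 'F_2) : b != 0 -> (a + b != 0) = (a == 0).
Proof. by case: (F2_cases a) => ->; case: (F2_cases b) => ->. Qed.

Lemma const_mx1_neq0 (R : nzRingType) n : (0 < n)%N -> (const_mx 1 : 'rV[R]_n) != 0.
Proof.
move=> n_gt0; apply/eqP => /matrixP /(_ 0 (Ordinal n_gt0)).
by rewrite !mxE; apply/eqP; rewrite oner_eq0.
Qed.

Lemma wtE m (v : 'rV['F_2]_m) : wt v = (\sum_j (v ord0 j != 0%R))%N.
Proof.
rewrite /wt -sum1_card big_mkcond /=.
by apply: eq_bigr => j _; rewrite inE; case: (_ != _).
Qed.

Lemma wt_eq0 m (v : 'rV['F_2]_m) : (wt v == 0%N) = (v == 0).
Proof.
rewrite /wt cards_eq0; apply/eqP/eqP => [/setP v0 | ->].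
  by apply/matrixP => i j; rewrite ord1 mxE; apply/eqP; have := v0 j; rewrite !inE => /negbFE.
by apply/setP => j; rewrite !inE mxE eqxx.
Qed.

Lemma wt_row_mx m n (a : 'rV['F_2]_m) (b : 'rV['F_2]_n) :
  wt (row_mx a b) = (wt a + wt b)%N.
Proof.
rewrite !wtE big_split_ord /=.
by congr (_ + _)%N; apply: eq_bigr => j _; rewrite ?row_mxEl ?row_mxEr.
Qed.

Lemma wt_mxrow n m (B : 'I_n -> 'rV['F_2]_m) :
  wt (@mxrow _ n (fun _ => m) 1 B) = (\sum_j wt (B j))%N.
Proof.
rewrite wtE; under [RHS]eq_bigr do rewrite wtE.
rewrite (@sig_big_dep _ _ _ _ (fun _ => 'I_m) xpredT (fun _ => xpredT)
   (fun j l => nat_of_bool (B j 0 l != 0))) /=.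
rewrite (reindex (@tagnat.sig n (fun _ => m))) /=; last exact: onW_bij tagnat.sig_bij.
by apply: eq_bigr => t _; rewrite mxE.
Qed.

Lemma mxrow_neq0 (V : nmodType) n p m (B : forall j : 'I_n, 'M[V]_(m, p)) :
  @mxrow _ n (fun _ => p) m B != 0 -> exists j, B j != 0.
Proof.
move=> B_neq0; apply/existsP; apply: contraR B_neq0 => /existsPn B0.
apply/eqP; rewrite -(mxrow0 (q_ := fun _ => p)).
by apply: eq_mxrow => j; apply/eqP; have := B0 j; rewrite negbK.
Qed.

Lemma rV_nz_coord (R : nmodType) n (x : 'rV[R]_n) : x != 0 -> exists i, x 0 i != 0.
Proof.
move=> x_neq0; apply/existsP; apply: contraR x_neq0 => /existsPn x0.
by apply/eqP/matrixP => i j; rewrite ord1 mxE; apply/eqP; have := x0 j; rewrite negbK.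
Qed.

Lemma card_cV_F2 k : #|{: 'cV['F_2]_k}| = (2 ^ k)%N.
Proof. by rewrite card_mx card_Fp // muln1. Qed.

(* Translation by the i0-th unit vector, where x_i0 = 1, swaps the vectors v
   with x v = 0 and those with x v = 1. *)
Lemma card_mulmx_cV_neq0 k (x : 'rV['F_2]_k) : x != 0 ->
  #|[set v : 'cV['F_2]_k | (x *m v) 0 0 != 0]| = (2 ^ (k - 1))%N.
Proof.
move=> x_neq0.
have [i0 x_i0] := rV_nz_coord x_neq0.
set A := [set v | _].
pose t (v : 'cV['F_2]_k) := v + delta_mx i0 0.
have t_inj : injective t by move=> a b; apply: addIr.
have tE v : (x *m t v) 0 0 = (x *m v) 0 0 + x 0 i0.
  by rewrite mulmxDr mxE; have /matrixP/(_ 0 0) := colE i0 x; rewrite mxE => ->.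
have le_A_AC : (#|A| <= #|~: A|)%N.
  rewrite -(card_imset _ t_inj); apply: subset_leq_card; apply/subsetP => w.
  by case/imsetP => v; rewrite !inE => Av ->; rewrite tE F2_addr_neq0.
have le_AC_A : (#|~: A| <= #|A|)%N.
  rewrite -(card_imset _ t_inj); apply: subset_leq_card; apply/subsetP => w.
  by case/imsetP => v; rewrite !inE negbK => Av ->; rewrite tE F2_addr_neq0.
have k_gt0 : (0 < k)%N := leq_ltn_trans (leq0n i0) (ltn_ord i0).
have := cardsC A; rewrite card_cV_F2 -[k in (2 ^ k)%N](subnK k_gt0) addn1 expnS.
lia.
Qed.

Lemma wt_mulmx_simplex k (G : 'M['F_2]_(k, 2 ^ k - 1)) (x : 'rV['F_2]_k) :
  simplex_gen G -> wt (x *m G) = if x == 0 then 0%N else (2 ^ (k - 1))%N.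
Proof.
case=> G_neq0 G_inj; have [->|x_neq0] := eqVneq x 0.
  by apply/eqP; rewrite mul0mx wt_eq0.
pose f j := col j G.
have fE j : (x *m G) 0 j = (x *m f j) 0 0.
  by rewrite !mxE; apply: eq_bigr => i _; rewrite mxE.
have im_f : f @: setT = [set v : 'cV['F_2]_k | v != 0].
  apply/eqP; rewrite eqEcard; apply/andP; split.
    by apply/subsetP => v /imsetP [j _ ->]; rewrite inE G_neq0.
  rewrite (card_imset _ G_inj) cardsT card_ord.
  have -> : [set v : 'cV['F_2]_k | v != 0] = ~: [set 0] by apply/setP => v; rewrite !inE.
  by rewrite cardsC1 card_cV_F2 subn1.
have im_supp : f @: [set j | (x *m G) 0 j != 0] = [set v | (x *m v) 0 0 != 0].
  apply/setP => v; rewrite inE; apply/imsetP/idP => [[j] | xv].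
    by rewrite inE fE => ? ->.
  have : v \in f @: setT by rewrite im_f inE; apply: contraNneq xv => ->; rewrite mulmx0 mxE.
  by case/imsetP => j _ vE; exists j => //; rewrite inE fE -vE.
by rewrite /wt -(card_mulmx_cV_neq0 x_neq0) -im_supp (card_imset _ G_inj).
Qed.

Lemma leq_sum_ord2 (g : nat -> nat) N b : (b.+1 < N)%N ->
  (g b + g b.+1 <= \sum_(i < N) g i)%N.
Proof.
move=> lt_b_N; rewrite -(big_mkord xpredT) (@big_cat_nat _ _ _ b) //=; last by lia.
by rewrite (@big_ltn _ _ _ b) ?(@big_ltn _ _ _ b.+1); lia.
Qed.

Lemma leq_sum_ord3 (g : nat -> nat) N b : (b.+2 < N)%N ->
  (g b + g b.+1 + g b.+2 <= \sum_(i < N) g i)%N.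
Proof.
move=> lt_b_N; rewrite -(big_mkord xpredT) (@big_cat_nat _ _ _ b) //=; last by lia.
by rewrite (@big_ltn _ _ _ b) ?(@big_ltn _ _ _ b.+1) ?(@big_ltn _ _ _ b.+2); lia.
Qed.

Section NonzeroHalves.
Variable V : zmodType.
Implicit Types (u : seq V) (i : nat).

Definition prev_coef u i : V := if i is i'.+1 then nth 0 u i' else 0.

Definition nz_halves u i : nat :=
  (nth 0 u i + prev_coef u i != 0) + (nth 0 u i != 0).

Lemma nz_halves_gt0 u i : nth 0 u i != 0 -> (0 < nz_halves u i)%N.
Proof. by rewrite /nz_halves => ->; rewrite addn1. Qed.

Lemma nz_halves_succ_gt0 u i : nth 0 u i != 0 -> (0 < nz_halves u i.+1)%N.
Proof.
rewrite /nz_halves [prev_coef _ _]/= => u_i; have [->|_] := eqVneq (nth 0 u i.+1) 0.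
  by rewrite add0r u_i.
by rewrite addn1.
Qed.

Lemma nz_halves0 u : nth 0 u 0 != 0 -> nz_halves u 0 = 2%N.
Proof. by rewrite /nz_halves addr0 => ->. Qed.

Lemma sum_nz_halves_ge3 u : (exists i, nth 0 u i != 0) ->
  (3 <= \sum_(i < (size u).+1) nz_halves u i)%N.
Proof.
case=> a u_a; have lt_a_u : (a < size u)%N.
  by rewrite ltnNge; apply: contra u_a => ?; rewrite nth_default.
have h_succ := nz_halves_succ_gt0 u_a.
have [sum_a|/negPn/eqP sum_a] := boolP (nth 0 u a + prev_coef u a != 0).
  have h_a : nz_halves u a = 2%N by rewrite /nz_halves sum_a u_a.
  by have := @leq_sum_ord2 (nz_halves u) (size u).+1 a; rewrite h_a; lia.
case: a u_a lt_a_u h_succ sum_a => [|a] u_a lt_a_u h_succ sum_a.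
  by rewrite /prev_coef addr0 in sum_a; rewrite sum_a eqxx in u_a.
have u_pred : nth 0 u a != 0.
  by apply: contra u_a => /eqP u0; move: sum_a; rewrite [prev_coef _ _]/= u0 addr0 => ->.
have := @leq_sum_ord3 (nz_halves u) (size u).+1 a.
by have := nz_halves_gt0 u_pred; have := nz_halves_gt0 u_a; lia.
Qed.

End NonzeroHalves.

Lemma cw_coefE k m (G : 'M['F_2]_(k, m)) u i :
  cw_coef G u i = nth 0 u i *m UM_G0 G + prev_coef u i *m UM_G1 G.
Proof. by case: i. Qed.

Lemma eq_cw_coef k m (G : 'M['F_2]_(k, m)) u v :
  nth 0 u =1 nth 0 v -> cw_coef G u =1 cw_coef G v.
Proof. by move=> uv [|i]; rewrite !cw_coefE /prev_coef !uv. Qed.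

Lemma cw_coef_neq0 k m (G : 'M['F_2]_(k, m)) u :
  (exists i, cw_coef G u i != 0) -> exists i, nth 0 u i != 0.
Proof.
case=> i c_i; have [u_i0|] := eqVneq (nth 0 u i) 0; last by exists i.
case: i c_i u_i0 => [|i] c_i u_i0.
  by rewrite cw_coefE /prev_coef u_i0 !mul0mx addr0 eqxx in c_i.
by exists i; apply: contra c_i => /eqP u_i; rewrite cw_coefE /= u_i0 u_i !mul0mx addr0.
Qed.

Lemma cw_coef0_neq0 k m (G : 'M['F_2]_(k, m)) u :
  cw_coef G u 0 != 0 -> nth 0 u 0 != 0.
Proof. by apply: contra => /eqP u0; rewrite cw_coefE /prev_coef u0 !mul0mx addr0. Qed.

Definition row_blocks k s (u : 'rV['F_2]_(\sum_(i < s.+1) k)) : seq 'rV['F_2]_k :=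
  [seq @submxrow _ s.+1 (fun _ => k) 1 u i | i <- enum 'I_s.+1].

Lemma size_row_blocks k s u : size (@row_blocks k s u) = s.+1.
Proof. by rewrite size_map size_enum_ord. Qed.

Lemma nth_row_blocks k s u (i : 'I_s.+1) :
  nth 0 (@row_blocks k s u) i = @submxrow _ s.+1 (fun _ => k) 1 u i.
Proof. by rewrite (nth_map ord0) ?size_enum_ord // nth_ord_enum. Qed.

Lemma nth_row_blocks_mxrow k s (v : seq 'rV['F_2]_k) : (size v <= s.+1)%N ->
  nth 0 (@row_blocks k s (@mxrow _ s.+1 (fun _ => k) 1 (fun i => nth 0 v i))) =1 nth 0 v.
Proof.
move=> size_v i; have [lt_i_s|le_s_i] := ltnP i s.+1.
  by rewrite (nth_row_blocks _ (Ordinal lt_i_s)) mxrowK.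
by rewrite !nth_default ?size_row_blocks // (leq_trans size_v).
Qed.

Lemma sum_ord_if_eq (V : nmodType) n (F : nat -> V) j :
  \sum_(i < n) (if j == val i then F i else 0) = if (j < n)%N then F j else 0.
Proof.
elim: n => [|n IH]; first by rewrite big_ord0.
rewrite big_ord_recr /= IH.
have [lt_j_n|lt_n_j|->] := ltngtP j n.
- by rewrite ltnS (ltnW lt_j_n) addr0.
- by rewrite ltnS leqNgt lt_n_j addr0.
- by rewrite ltnSn add0r.
Qed.

(* Row i of G_total hits block column j with G0 if j = i and G1 if j = i+1,
   so block j of u G_total is u_j G0 + u_(j-1) G1 = c_j. *)
Lemma mulmx_G_total k m s (G : 'M['F_2]_(k, m)) (u : 'rV['F_2]_(\sum_(i < s.+1) k)) :
  u *m G_total s G =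
  @mxrow _ s.+2 (fun _ => (m + m)%N) 1 (fun j => cw_coef G (row_blocks u) j).
Proof.
rewrite -[u in LHS](@submxrowK _ s.+1 (fun _ => k)) /G_total mul_mxrow_mxblock.
apply/eq_mxrow => j; set b := nth 0 (row_blocks u).
have b_out i : (s.+1 <= i)%N -> b i = 0.
  by move=> ?; rewrite /b nth_default // size_row_blocks.
transitivity (\sum_(i < s.+1) ((if val j == val i then b i *m UM_G0 G else 0) +
                               (if val j == (val i).+1 then b i *m UM_G1 G else 0))).
  apply: eq_bigr => i _; rewrite /b nth_row_blocks.
  case: eqP => [->|_]; first by rewrite (ltn_eqF (ltnSn _)) addr0.
  by case: eqP => _; rewrite ?mulmx0 ?add0r.
rewrite big_split /= (sum_ord_if_eq _ (fun i => b i *m UM_G0 G)).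
have -> : (if (j < s.+1)%N then b j *m UM_G0 G else 0) = b j *m UM_G0 G.
  by case: ltnP => // /b_out ->; rewrite mul0mx.
case: j => [[|j] lt_j_s] /=; first by rewrite big1 // /cw_coef mul0mx !addr0.
under eq_bigr do rewrite eqSS.
by rewrite (sum_ord_if_eq _ (fun i => b i *m UM_G1 G)) -ltnS lt_j_s.
Qed.

Section UMSimplexCode.
Variables (k : nat) (G : 'M['F_2]_(k, 2 ^ k - 1)).
Hypothesis simplexG : simplex_gen G.

Lemma wt_cw_coef u i : wt (cw_coef G u i) = (2 ^ (k - 1) * nz_halves u i)%N.
Proof.
rewrite cw_coefE /UM_G0 /UM_G1 !mul_mx_row mulmx0 add_row_mx addr0.
rewrite wt_row_mx -mulmxDl !wt_mulmx_simplex // /nz_halves.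
by case: eqP => _; case: eqP => _ /=; lia.
Qed.

Lemma sum_wt_cw_coef u N :
  (\sum_(i < N) wt (cw_coef G u i) = 2 ^ (k - 1) * \sum_(i < N) nz_halves u i)%N.
Proof. by rewrite big_distrr; apply: eq_bigr => i _; rewrite wt_cw_coef. Qed.

Lemma cw_wt_ge u : (exists i, nth 0 u i != 0) -> (3 * 2 ^ (k - 1) <= cw_wt G u)%N.
Proof.
by move=> /sum_nz_halves_ge3; rewrite /cw_wt sum_wt_cw_coef mulnC leq_pmul2l ?expn_gt0.
Qed.

Lemma sum_wt_cw_coef1 (x : 'rV['F_2]_k) N : x != 0 -> (2 <= N)%N ->
  (\sum_(i < N) wt (cw_coef G [:: x] i) = 3 * 2 ^ (k - 1))%N.
Proof.
case: N => [|[|N]] // x_neq0 _.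
rewrite 2!big_ord_recl big1 => [|i _]; last by rewrite wt_cw_coef /nz_halves /= nth_nil addr0 eqxx muln0.
by rewrite !wt_cw_coef /nz_halves /= addr0 add0r x_neq0 eqxx; lia.
Qed.

Lemma cw_coef1_neq0 (x : 'rV['F_2]_k) : x != 0 -> cw_coef G [:: x] 0 != 0.
Proof. by move=> x_neq0; rewrite -wt_eq0 wt_cw_coef nz_halves0 // muln_eq0 expn_eq0. Qed.

Lemma block_weights_min (x : 'rV['F_2]_k) s :
  x != 0 -> is_min (block_weights s G) (3 * 2 ^ (k - 1)).
Proof.
move=> x_neq0; split => [|w [u [uG_neq0 <-]]].
  pose u := @mxrow _ s.+1 (fun _ => k) 1 (fun i => nth 0 [:: x] i).
  have wt_uG : wt (u *m G_total s G) = (3 * 2 ^ (k - 1))%N.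
    rewrite mulmx_G_total wt_mxrow -(sum_wt_cw_coef1 x_neq0 (isT : 2 <= s.+2)%N).
    by apply: eq_bigr => j _; rewrite (eq_cw_coef _ (nth_row_blocks_mxrow _)).
  by exists u; rewrite -wt_eq0 wt_uG muln_eq0 expn_eq0.
rewrite mulmx_G_total in uG_neq0 *; rewrite wt_mxrow.
have [j c_j] := mxrow_neq0 uG_neq0.
by have := cw_wt_ge (cw_coef_neq0 (ex_intro _ (val j) c_j)); rewrite /cw_wt size_row_blocks.
Qed.

Lemma column_weights0_min (x : 'rV['F_2]_k) :
  x != 0 -> is_min (column_weights G 0) (2 ^ k).
Proof.
move=> x_neq0; have [i0 _] := rV_nz_coord x_neq0.
have wt_c0 u : nth 0 u 0 != 0 -> wt (cw_coef G u 0) = (2 ^ k)%N.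
  move=> u0; rewrite wt_cw_coef nz_halves0 // mulnC -expnS subn1.
  by rewrite prednK // (leq_ltn_trans (leq0n i0)).
split => [|w [u [c0 <-]]]; first by exists [:: x]; rewrite big_ord1 wt_c0 ?cw_coef1_neq0.
by rewrite big_ord1 wt_c0 // (cw_coef0_neq0 c0).
Qed.

Lemma free_weights_min (x : 'rV['F_2]_k) :
  x != 0 -> is_min (free_weights G) (3 * 2 ^ (k - 1)).
Proof.
move=> x_neq0; split => [|w [u [/cw_coef_neq0 ex_u <-]]]; last exact: cw_wt_ge.
exists [:: x]; split; first by exists 0%N; exact: cw_coef1_neq0.
by rewrite /cw_wt sum_wt_cw_coef1.
Qed.

Lemma column_weights_min (x : 'rV['F_2]_k) j : x != 0 -> (1 <= j)%N ->
  is_min (column_weights G j) (3 * 2 ^ (k - 1)).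
Proof.
move=> x_neq0 j_gt0; split => [|w [u [c0 <-]]].
  by exists [:: x]; rewrite cw_coef1_neq0 // sum_wt_cw_coef1.
have u0 := cw_coef0_neq0 c0.
rewrite sum_wt_cw_coef mulnC leq_pmul2l ?expn_gt0 //.
have := @leq_sum_ord2 (nz_halves u) j.+1 0 j_gt0.
by rewrite nz_halves0 //; have := nz_halves_succ_gt0 u0; lia.
Qed.

End UMSimplexCode.

Theorem theorem5p1 (k : nat) (hk : (2 <= k)%N) (G : 'M['F_2]_(k, 2 ^ k - 1))
  (hG : simplex_gen G) :
  (forall s : nat, is_min (block_weights s G) (3 * 2 ^ (k - 1))) /\
  is_min (column_weights G 0) (2 ^ k) /\
  is_min (free_weights G) (3 * 2 ^ (k - 1)) /\
  (forall j : nat, (1 <= j)%N -> is_min (column_weights G j) (3 * 2 ^ (k - 1))).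
Proof.
have x_neq0 := @const_mx1_neq0 'F_2 k (ltnW hk).
split; first by move=> s; exact: block_weights_min x_neq0.
split; first exact: column_weights0_min x_neq0.
split; first exact: free_weights_min x_neq0.
by move=> j; exact: column_weights_min x_neq0.
Qed.
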